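(* Let $\Gamma\subset\mathbb{Z}^2$ be a finite convex domain and let $B_1,\dots,B_{|\partial\Gamma|}$ be a basis of the module $\mathcal{H}_\mathbb{Z}^\Gamma$ of integer-valued harmonic functions on $\Gamma$. Let $\Delta\mathcal{B}^\Gamma_\mathbb{Z}\in\mathbb{Z}^{|\partial\Gamma|\times|\partial\Gamma|}$ be the matrix whose $i$-th column is $(\Delta_\Gamma B_i)|_{\partial\Gamma}$. Then the order of the sandpile group satisfies $|G_\Gamma|=|\det(\Delta\mathcal{B}^\Gamma_\mathbb{Z})|$.
   Context: A set $\Gamma\subseteq\mathbb{Z}^2$ is a convex domain if $\Gamma=P\cap\mathbb{Z}^2$ for some convex open $P\subseteq\mathbb{R}^2$. The reduced Laplacian of finite $\Gamma$ (complement of $\Gamma$ in $\mathbb{Z}^2$ contracted to a sink) is $(\Delta_\Gamma f)(v)=\sum_{w\in\Gamma,\,w\sim v}f(w)-4f(v)$, adjacency being nearest-neighbor adjacency in $\mathbb{Z}^2$; the sandpile group is $G_\Gamma=\mathbb{Z}^\Gamma/\Delta_\Gamma(\mathbb{Z}^\Gamma)$. The boundary $\partial\Gamma$ is the set of vertices of $\Gamma$ with a neighbor outside $\Gamma$. A function $H:\Gamma\to\mathbb{Z}$ is harmonic if $(\Delta_\Gamma H)(v)=0$ for all $v\in\Gamma\setminus\partial\Gamma$; these form the free abelian group $\mathcal{H}_\mathbb{Z}^\Gamma$ of rank $|\partial\Gamma|$. The order of the basis elements in the matrix and of the rows indexed by $\partial\Gamma$ is arbitrary. *)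

From HB Require Import structures.
From mathcomp Require Import all_boot all_order all_algebra.
From mathcomp Require Import finmap.
From mathcomp Require Import Rstruct.
From Stdlib Require Import Reals.
Set Implicit Arguments. Unset Strict Implicit. Unset Printing Implicit Defensive.
Import Order.TTheory GRing.Theory Num.Theory.
Local Open Scope ring_scope.

Definition neighbors (p : int * int) : seq (int * int) :=
  [:: ((fst p) + 1, (snd p)); ((fst p) - 1, (snd p)); ((fst p), (snd p) + 1); ((fst p), (snd p) - 1)].

Definition adjZ2 (p q : int * int) : bool := q \in neighbors p.

Definition open_R2 (P : R * R -> Prop) : Prop :=
  forall p, P p -> exists e : R, 0 < e /\
    forall q : R * R, ((fst q) - (fst p)) ^+ 2 + ((snd q) - (snd p)) ^+ 2 < e ^+ 2 -> P q.

Definition convex_R2 (P : R * R -> Prop) : Prop :=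
  forall p q (t : R), P p -> P q -> 0 <= t -> t <= 1 ->
    P ((1 - t) * (fst p) + t * (fst q), (1 - t) * (snd p) + t * (snd q)).

Definition convex_domain (G : {fset (int * int)}) : Prop :=
  exists P : R * R -> Prop, open_R2 P /\ convex_R2 P /\
    forall p : int * int, p \in G <-> P (((fst p))%:~R, ((snd p))%:~R).

Definition on_boundary (G : {fset (int * int)}) (p : int * int) : bool :=
  (p \in G) && has (fun q => q \notin G) (neighbors p).

(* Reduced Laplacian (sink = complement of Gamma). *)
Definition lap (G : {fset (int * int)}) (f : {ffun G -> int}) (v : G) : int :=
  \sum_(w : G | adjZ2 (val v) (val w)) f w - 4 * f v.

Definition harmonic (G : {fset (int * int)}) (H : {ffun G -> int}) : Prop :=
  forall v : G, ~~ on_boundary G (val v) -> lap H v = 0.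

Definition harmonic_basis (G : {fset (int * int)}) (k : nat)
    (B : 'I_k -> {ffun G -> int}) : Prop :=
  [/\ forall i, harmonic (B i),
      (forall c : 'I_k -> int,
         (forall v : G, \sum_i c i * B i v = 0) -> forall i, c i = 0) &
      (forall H, harmonic H ->
         exists c : 'I_k -> int, forall v : G, H v = \sum_i c i * B i v)].

(* f ≡ g in the sandpile group Z^Gamma / Delta_Gamma(Z^Gamma). *)
Definition sandpile_congr (G : {fset (int * int)}) (f g : {ffun G -> int}) : Prop :=
  exists h : {ffun G -> int}, forall v : G, f v - g v = lap h v.

Definition sandpile_order (G : {fset (int * int)}) (N : nat) : Prop :=
  exists reps : 'I_N -> {ffun G -> int},
    (forall i j, sandpile_congr (reps i) (reps j) -> i = j) /\
    (forall f, exists i, sandpile_congr f (reps i)).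

(* Extending integer vectors on the boundary by zero induces an isomorphism from
   Z^k / M Z^k onto the sandpile group, where M = ΔB restricted to the boundary.
   It is onto because any f can be corrected, one row at a time from the top
   down, by Laplacians of functions shifted one row down, until it vanishes on
   the interior.  It is injective because if the extensions of c and c' differ
   by Δh, then h is harmonic, hence an integer combination of the B_j, and
   reading Δh on the boundary gives c - c' ∈ M Z^k.  The maximum principle makes
   the columns of M independent, so det M ≠ 0, and by the Smith normal form the
   cokernel of a nonsingular integer matrix has |det M| elements. *)

From HB Require Import structures.
From mathcomp Require Import all_boot all_order all_algebra.
From mathcomp Require Import finmap zify lra.
Set Implicit Arguments. Unset Strict Implicit. Unset Printing Implicit Defensive.
Import Order.TTheory GRing.Theory Num.Theory.
Local Open Scope ring_scope.

(* [sandpile_order G N] unfolds to [num_classes (@sandpile_congr G) N]. *)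
Definition num_classes (X : Type) (R : X -> X -> Prop) (N : nat) : Prop :=
  exists reps : 'I_N -> X,
    (forall i j, R (reps i) (reps j) -> i = j) /\ (forall x, exists i, R x (reps i)).

Lemma num_classes_card (T : finType) (X : Type) (R : X -> X -> Prop) (reps : T -> X) :
  (forall i j, R (reps i) (reps j) -> i = j) -> (forall x, exists i, R x (reps i)) ->
  num_classes R #|T|.
Proof.
move=> reps_inj reps_cover; exists (reps \o enum_val).
split=> [i j /reps_inj/enum_val_inj // | x].
by have [i xi] := reps_cover x; exists (enum_rank i); rewrite /= enum_rankK.
Qed.

Lemma num_classes_transfer (X Y : Type) (R : X -> X -> Prop) (S : Y -> Y -> Prop)
    (phi : X -> Y) N :
  (forall x x', S (phi x) (phi x') <-> R x x') -> (forall y, exists x, S y (phi x)) ->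
  (forall y y' y'', S y y' -> S y' y'' -> S y y'') ->
  num_classes R N -> num_classes S N.
Proof.
move=> phiE phi_cover S_trans [reps [reps_inj reps_cover]].
exists (phi \o reps); split=> [i j /phiE/reps_inj // | y].
have [x yx] := phi_cover y; have [i xi] := reps_cover x.
by exists i; apply: S_trans yx _; apply/phiE.
Qed.

Definition coker_congr k (M : 'M[int]_k) (c c' : 'cV[int]_k) : Prop :=
  exists a, c - c' = M *m a.

Lemma coker_congr_trans k (M : 'M[int]_k) c c' c'' :
  coker_congr M c c' -> coker_congr M c' c'' -> coker_congr M c c''.
Proof. by move=> [a ea] [b eb]; exists (a + b); rewrite mulmxDr -ea -eb addrA subrK. Qed.

Lemma num_classes_coker_unimodular k (L D R : 'M[int]_k) N :
  L \in unitmx -> R \in unitmx ->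
  num_classes (coker_congr D) N -> num_classes (coker_congr (L *m D *m R)) N.
Proof.
move=> uL uR; apply: (num_classes_transfer (phi := mulmx L)); last first.
- exact: coker_congr_trans.
- by move=> c; exists (invmx L *m c), 0; rewrite mulKVmx // subrr mulmx0.
move=> c c'; split=> [[a ea] | [a ea]].
  by exists (R *m a); rewrite -(mulKmx uL (c - c')) mulmxBr ea -!mulmxA mulKmx.
by exists (invmx R *m a); rewrite -mulmxBr ea -!mulmxA mulKVmx.
Qed.

Lemma modz_abs (m d : int) : (m %% `|d|)%Z = (m %% d)%Z.
Proof. by case: (ltrP d 0) => [/ltr0_norm | /ger0_norm] ->; rewrite ?modzN. Qed.

Lemma num_classes_coker_diag k (d : 'I_k -> int) : (forall i, d i != 0) ->
  num_classes (coker_congr (diag_mx (\row_i d i))) (\prod_i `|d i|)%N.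
Proof.
move=> d_neq0; pose T := {dffun forall i : 'I_k, 'I_`|d i|}.
have -> : (\prod_i `|d i|)%N = #|T|.
  rewrite card_dep_ffun foldrE big_map big_enum /=.
  by apply: eq_bigr => i _; rewrite card_ord.
have diagE (a : 'cV[int]_k) i : (diag_mx (\row_i d i) *m a) i 0 = d i * a i 0.
  by rewrite mul_diag_mx !mxE.
have residue_small (r : int) i : 0 <= r < `|d i|%:Z -> (r %% d i)%Z = r.
  by move=> r_bd; rewrite -modz_abs modz_small.
apply: (num_classes_card (reps := fun e : T => \col_i (e i : int))).
  move=> e e' [a ea]; apply/ffunP => i; apply/val_inj/eqP; rewrite -eqz_nat.
  have /eqP := congr1 (fun v : 'cV_k => v i 0) ea.
  rewrite diagE !mxE subr_eq => /eqP e_i.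
  rewrite -[X in X == _](residue_small _ i) ?ltz_nat ?ltn_ord // e_i mulrC modzMDl.
  by rewrite residue_small ?ltz_nat ?ltn_ord.
move=> c; have residue_lt i : (`|(c i ord0 %% d i)%Z| < `|d i|)%N.
  by have := modz_ge0 (c i 0) (d_neq0 i); have := ltz_mod (c i 0) (d_neq0 i); lia.
exists [ffun i => Ordinal (residue_lt i)], (\col_i (c i ord0 %/ d i)%Z).
apply/matrixP => i j; rewrite (ord1 j) diagE !mxE ffunE /= mulrC.
by rewrite gez0_abs ?modz_ge0 // {1}(divz_eq (c i 0) (d i)) addrK.
Qed.

Lemma absz_unit (x : int) : x \is a GRing.unit -> `|x|%N = 1%N.
Proof.
case/unitrP=> y [yx _]; have := congr1 absz yx; rewrite abszM.
by move/eqP; rewrite muln_eq1 => /andP[_ /eqP].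
Qed.

Lemma num_classes_coker_det k (M : 'M[int]_k) :
  \det M != 0 -> num_classes (coker_congr M) `|\det M|%N.
Proof.
have [L uL [R uR [d _ M_LdR]]] := int_Smith_normal_form M.
have {M_LdR} -> : M = L *m diag_mx (\row_i d`_i) *m R.
  by rewrite M_LdR; congr (_ *m _ *m _); apply/matrixP => i j; rewrite !mxE.
rewrite !det_mulmx det_diag !mulf_eq0 !negb_or => /andP[/andP[_ /prodf_neq0 d_neq0] _].
rewrite !abszM !(@absz_unit (\det _)) -?unitmxE // mul1n muln1.
rewrite (big_morph absz abszM (erefl (absz 1))).
apply: num_classes_coker_unimodular => //.
under eq_bigr do rewrite mxE.
by apply: num_classes_coker_diag => i; have := d_neq0 i isT; rewrite mxE.
Qed.

Section Laplacian.
Variable G : {fset (int * int)}.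
Implicit Types (f g h : {ffun G -> int}) (u v w : G) (p q : int * int).

Definition zext f q : int := if insub q is Some w then f w else 0.

Lemma zext_sum f q : zext f q = \sum_(w | val w == q) f w.
Proof.
rewrite /zext; case: insubP => [w _ <- | q_notin].
  by rewrite (big_pred1 w) // => x /=; rewrite val_eqE.
by rewrite big_pred0 // => w; apply: contraNF q_notin => /eqP <-; rewrite fsvalP.
Qed.

Lemma zext_val f v : zext f (val v) = f v.
Proof. by rewrite /zext valK. Qed.

Lemma zext_ffun (F : int * int -> int) q : q \in G -> zext [ffun w => F (val w)] q = F q.
Proof. by move=> qG; rewrite /zext insubT ffunE. Qed.

Lemma zext_le f (m : int) q : (forall v, f v <= m) -> 0 <= m -> zext f q <= m.
Proof. by move=> f_le m_ge0; rewrite /zext; case: insub. Qed.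

Lemma lap_neighborsE f u : lap f u = \sum_(q <- neighbors (val u)) zext f q - 4 * f u.
Proof.
rewrite /lap; congr (_ - _); under [RHS]eq_bigr do rewrite zext_sum big_mkcond.
rewrite exchange_big /= big_mkcond /=; apply: eq_bigr => w _.
rewrite -big_mkcond big_const_seq.
have -> : count (fun q => val w == q) (neighbors (val u)) = adjZ2 (val u) (val w) :> nat.
  rewrite -count_uniq_mem; last by case: (val u) => x y; rewrite /= !inE !xpair_eqE; lia.
  by apply: eq_count => q /=; rewrite eq_sym.
by case: adjZ2; rewrite /= ?addr0.
Qed.

Lemma lap_ge0_le0 h : (forall v, 0 <= lap h v) -> forall v, h v <= 0.
Proof.
move=> lap_ge0 v0; rewrite leNgt; apply/negP => h_v0_gt0.
have [vm _ vm_max] := @arg_maxP _ _ G v0 xpredT h isT.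
have h_le v : h v <= h vm by exact: vm_max.
have m_gt0 : 0 < h vm := lt_le_trans h_v0_gt0 (h_le v0).
(* A rightmost maximum point has a strictly smaller right neighbour. *)
have [w /eqP hw w_right] :=
  @arg_maxP _ _ G vm (fun v => h v == h vm) (fun v => (val v).1) (eqxx _).
have right_lt : zext h ((val w).1 + 1, (val w).2) < h vm.
  rewrite /zext; case: insubP => [x _ val_x | //].
  rewrite lt_neqAle h_le andbT; apply: contraTN isT => /w_right; rewrite val_x /=.
  by lia.
have zext_le_m q := zext_le q h_le (ltW m_gt0).
have := lap_ge0 w; rewrite lap_neighborsE /neighbors !big_cons big_nil addr0 hw.
have := zext_le_m ((val w).1 - 1, (val w).2).
have := zext_le_m ((val w).1, (val w).2 + 1).
have := zext_le_m ((val w).1, (val w).2 - 1).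
by lra.
Qed.

Lemma lapD f g u : lap [ffun v => f v + g v] u = lap f u + lap g u.
Proof.
rewrite /lap; under eq_bigr do rewrite ffunE.
by rewrite big_split ffunE /=; lra.
Qed.

Lemma lapN f u : lap [ffun v => - f v] u = - lap f u.
Proof.
rewrite /lap; under eq_bigr do rewrite ffunE.
by rewrite sumrN ffunE; lra.
Qed.

Lemma lap_lincomb n (a : 'I_n -> int) (B : 'I_n -> {ffun G -> int}) u :
  lap [ffun v => \sum_j a j * B j v] u = \sum_j a j * lap (B j) u.
Proof.
rewrite /lap; under eq_bigr do rewrite ffunE.
rewrite ffunE exchange_big /= mulr_sumr -sumrB; apply: eq_bigr => j _.
by rewrite mulrBr mulr_sumr mulrCA.
Qed.

Lemma lap_eq0 h : (forall v, lap h v = 0) -> forall v, h v = 0.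
Proof.
move=> lap0 v; apply/eqP; rewrite eq_le lap_ge0_le0 => [|u]; last by rewrite lap0.
have := @lap_ge0_le0 [ffun x => - h x] _ v; rewrite ffunE oppr_le0.
by apply=> u; rewrite lapN lap0 oppr0.
Qed.

Lemma interior_neighbor_in u q :
  ~~ on_boundary G (val u) -> q \in neighbors (val u) -> q \in G.
Proof.
rewrite /on_boundary fsvalP andTb => u_int q_nb; apply: contraNT u_int => q_notin.
by apply/hasP; exists q.
Qed.

Definition interior_row g t : {ffun G -> int} :=
  [ffun v => if ~~ on_boundary G (val v) && ((val v).2 == t) then g v else 0].

Lemma zext_interior_row g t q : q.2 != t -> zext (interior_row g t) q = 0.
Proof.
rewrite /zext; case: insubP => // v _ <- v_row.
by rewrite ffunE (negbTE v_row) andbF.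
Qed.

Definition shift_down f : {ffun G -> int} := [ffun v => zext f ((val v).1, (val v).2 + 1)].

Lemma lap_shift_down_interior_row g t u : ~~ on_boundary G (val u) -> t <= (val u).2 ->
  lap (shift_down (interior_row g t)) u = if (val u).2 == t then g u else 0.
Proof.
move=> u_int t_le; rewrite lap_neighborsE /neighbors !big_cons big_nil.
have zext_shift q : q \in neighbors (val u) ->
    zext (shift_down (interior_row g t)) q = zext (interior_row g t) (q.1, q.2 + 1).
  move=> q_nb; rewrite (zext_ffun (fun p => zext (interior_row g t) (p.1, p.2 + 1))) //.
  exact: interior_neighbor_in u_int q_nb.
rewrite !zext_shift ?inE ?eqxx ?orbT //= subrK -surjective_pairing zext_val.
rewrite [shift_down _ u]ffunE [interior_row _ _ u]ffunE u_int !zext_interior_row /=.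
  by case: (_ == t); lra.
all: by rewrite gt_eqF //; lra.
Qed.

Definition lap_onto_rows_ge (t : int) : Prop :=
  forall f, exists h, forall v, ~~ on_boundary G (val v) -> t <= (val v).2 -> f v = lap h v.

Lemma lap_onto_rows_ge_pred t : lap_onto_rows_ge (t + 1) -> lap_onto_rows_ge t.
Proof.
move=> onto_above f; have [h fE] := onto_above f.
pose g := [ffun v => f v - lap h v].
exists [ffun v => h v + shift_down (interior_row g t) v] => u u_int t_le.
rewrite lapD lap_shift_down_interior_row //; case: eqP => [_ | u_row].
  by rewrite ffunE addrC subrK.
by rewrite addr0 fE // lezD1 lt_neqAle t_le andbT eq_sym; apply/eqP.
Qed.

Lemma lap_onto_interior f :
  exists h, forall v, ~~ on_boundary G (val v) -> f v = lap h v.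
Proof.
pose Y := (\max_(v : G) `|(val v).2|)%N.
have row_bound v : - Y%:Z <= (val v).2 <= Y%:Z.
  by rewrite -ler_norml lez_nat leq_bigmax.
have onto_top : lap_onto_rows_ge (Y%:Z + 1).
  by move=> f'; exists f' => v _ v_row; have /andP[] := row_bound v; lra.
have onto n : lap_onto_rows_ge (Y%:Z + 1 - n%:Z).
  elim: n => [|n IHn]; first by rewrite subr0.
  apply: lap_onto_rows_ge_pred.
  by have -> : Y%:Z + 1 - n.+1%:Z + 1 = Y%:Z + 1 - n%:Z by rewrite -addn1 PoszD; lra.
have [h fE] := onto Y.*2.+1 f; exists h => v v_int; apply: fE => //.
have /andP[] := row_bound v; rewrite -addn1 -mul2n PoszD PoszM; lra.
Qed.

Lemma sandpile_congr_trans f g h :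
  sandpile_congr f g -> sandpile_congr g h -> sandpile_congr f h.
Proof.
move=> [d1 fg] [d2 gh]; exists [ffun v => d1 v + d2 v] => v.
by rewrite lapD -fg -gh addrA subrK.
Qed.

End Laplacian.

Section BoundaryCoordinates.
Variables (G : {fset (int * int)}) (k : nat) (bd : 'I_k -> G).
Hypotheses (bd_inj : injective bd)
  (bd_onto : forall v : G, on_boundary G (val v) <-> exists i, bd i = v).
Variable B : 'I_k -> {ffun G -> int}.
Hypothesis B_basis : harmonic_basis B.

Definition boundary_lap_mx : 'M[int]_k := \matrix_(i < k, j < k) lap (B j) (bd i).
Local Notation M := boundary_lap_mx.

Definition bd_ffun (c : 'cV[int]_k) : {ffun G -> int} :=
  [ffun v => \sum_i (if bd i == v then c i 0 else 0)].

Lemma bd_ffun_bd c i : bd_ffun c (bd i) = c i 0.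
Proof.
rewrite ffunE (bigD1 i) //= eqxx big1 ?addr0 // => j j_neq_i.
by rewrite (inj_eq bd_inj) (negbTE j_neq_i).
Qed.

Lemma bd_ffun_interior c v : ~~ on_boundary G (val v) -> bd_ffun c v = 0.
Proof.
move=> v_int; rewrite ffunE big1 // => i _; case: eqP => // bd_i.
by move: v_int; rewrite (bd_onto v).2 //; exists i.
Qed.

Definition harmonic_comb (a : 'cV[int]_k) : {ffun G -> int} :=
  [ffun v => \sum_j a j 0 * B j v].

Lemma lap_harmonic_comb_bd a i : lap (harmonic_comb a) (bd i) = (M *m a) i 0.
Proof.
rewrite lap_lincomb !mxE; apply: eq_bigr => j _.
by rewrite mxE mulrC.
Qed.

Lemma lap_harmonic_comb_interior a v :
  ~~ on_boundary G (val v) -> lap (harmonic_comb a) v = 0.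
Proof.
have [B_harm _ _] := B_basis.
by move=> v_int; rewrite lap_lincomb big1 // => j _; rewrite B_harm // mulr0.
Qed.

Lemma boundary_lap_mx_det_neq0 : \det M != 0.
Proof.
have [_ B_free _] := B_basis.
rewrite -det_tr; apply/negP => /det0P[v /eqP v_neq0 vM0]; apply: v_neq0.
have Mv0 : M *m v^T = 0 by rewrite -[M]trmxK -trmx_mul vM0 trmx0.
have comb0 : forall u, harmonic_comb v^T u = 0.
  apply: lap_eq0 => u; case: (boolP (on_boundary G (val u))) => [|u_int].
    by case/(bd_onto u).1 => i <-; rewrite lap_harmonic_comb_bd Mv0 mxE.
  exact: lap_harmonic_comb_interior.
have v0 j : v^T j 0 = 0.
  by apply: (B_free (fun i => v^T i 0)) => u; rewrite -[RHS](comb0 u) ffunE.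
by apply/rowP => j; have := v0 j; rewrite !mxE.
Qed.

Lemma sandpile_congr_bd_ffun c c' :
  sandpile_congr (bd_ffun c) (bd_ffun c') <-> coker_congr M c c'.
Proof.
have [_ _ B_span] := B_basis.
split=> [[h hE] | [a aE]].
  have [b bE] : exists b : 'cV_k, h = harmonic_comb b.
    have h_harm : harmonic h by move=> v v_int; rewrite -hE !bd_ffun_interior ?subr0.
    have [b hb] := B_span h h_harm.
    exists (\col_j b j); apply/ffunP => v; rewrite ffunE hb.
    by apply: eq_bigr => j _; rewrite mxE.
  exists b; apply/matrixP => i j; rewrite (ord1 j) !mxE -!bd_ffun_bd hE bE.
  by rewrite lap_harmonic_comb_bd mxE.
exists (harmonic_comb a) => v; case: (boolP (on_boundary G (val v))) => [|v_int].
  by case/(bd_onto v).1 => i <-; rewrite !bd_ffun_bd lap_harmonic_comb_bd -aE !mxE.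
by rewrite !bd_ffun_interior // lap_harmonic_comb_interior // subr0.
Qed.

Lemma sandpile_congr_bd_ffun_cover f : exists c, sandpile_congr f (bd_ffun c).
Proof.
have [h hE] := lap_onto_interior f.
exists (\col_i (f (bd i) - lap h (bd i))), h => v.
case: (boolP (on_boundary G (val v))) => [|v_int].
  by case/(bd_onto v).1 => i <-; rewrite bd_ffun_bd mxE opprB addrC subrK.
by rewrite bd_ffun_interior // subr0 hE.
Qed.

End BoundaryCoordinates.

Theorem lemma2 (G : {fset (int * int)}) (hG : convex_domain G)
    (k : nat) (bd : 'I_k -> G) (bd_inj : injective bd)
    (bd_onto : forall v : G, on_boundary G (val v) <-> exists i, bd i = v)
    (B : 'I_k -> {ffun G -> int}) (hB : harmonic_basis B) :
  sandpile_order G `|\det (\matrix_(i < k, j < k) lap (B j) (bd i))|%N.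
Proof.
apply: (num_classes_transfer (phi := bd_ffun bd)).
- exact (sandpile_congr_bd_ffun bd_inj bd_onto hB).
- exact: sandpile_congr_bd_ffun_cover bd_inj bd_onto.
- exact: sandpile_congr_trans.
- exact/num_classes_coker_det/(boundary_lap_mx_det_neq0 bd_onto hB).
Qed.
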